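(* Let $n\in\mathbb{R}$, let $\Omega_1\in\mathbb{R}[x]$ be a nonzero polynomial of degree at most $2$, let $L\in\mathbb{R}[x]$ have degree at most $1$, and let $I$ be an open interval on which $\Omega_1$ has no zeros. Consider the quadratic system $$\dot x=\Omega_1(x),\qquad \dot y=(2n+1)L'(x)\Omega_1(x)-\frac{n(n+1)}{2}\Omega_1(x)\Omega_1''(x)-L(x)^2+y^2,$$ and the linear equation $$\Omega_1(x)w''+(\Omega_1'(x)-2L(x))w'+\frac n2\left(4L'(x)-(n+1)\Omega_1''(x)\right)w=0.\qquad( * )$$ (i) For every solution $p\in C^2(I)$ of $( * )$, the function $f_p(x,y)=p(x)\,y+\Omega_1(x)p'(x)-L(x)p(x)$ satisfies $\Omega_1\,\partial_xf_p+\dot y\,\partial_yf_p=(y+L(x))\,f_p$ on $I\times\mathbb{R}$ (here $\dot y$ denotes the right-hand side of the second equation). (ii) If $\{p_1,p_2\}$ is a fundamental system of solutions of $( * )$ on $I$, then $H=f_{p_1}/f_{p_2}$ is a first integral of the system on the open set $\{(x,y)\in I\times\mathbb{R}: f_{p_2}(x,y)\neq0\}$.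
   Context: A first integral of the planar system $\dot x=P,\dot y=Q$ on an open set $U$ is a $C^1$ function $H$ with $P\partial_xH+Q\partial_yH=0$ on $U$ which is not constant on any nonempty open subset of $U$. *)

From Stdlib Require Import Reals.
From Coquelicot Require Import Coquelicot.
Open Scope R_scope.

Definition poly2 (c2 c1 c0 : R) (x : R) : R := c2 * x ^ 2 + c1 * x + c0.
Definition poly1 (l1 l0 : R) (x : R) : R := l1 * x + l0.

Definition in_interval (a b : Rbar) (x : R) : Prop := Rbar_lt a x /\ Rbar_lt x b.

Definition ydot (n : R) (Om L : R -> R) (x y : R) : R :=
  (2 * n + 1) * Derive L x * Om x
  - n * (n + 1) / 2 * Om x * Derive (Derive Om) x
  - (L x) ^ 2 + y ^ 2.

Definition is_C2_solution (n : R) (Om L : R -> R) (a b : Rbar) (p : R -> R) : Prop :=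
  forall x, in_interval a b x ->
    ex_derive p x /\ ex_derive (Derive p) x /\ continuous (Derive (Derive p)) x /\
    Om x * Derive (Derive p) x + (Derive Om x - 2 * L x) * Derive p x
    + n / 2 * (4 * Derive L x - (n + 1) * Derive (Derive Om) x) * p x = 0.

Definition fundamental_system (n : R) (Om L : R -> R) (a b : Rbar) (p1 p2 : R -> R) : Prop :=
  is_C2_solution n Om L a b p1 /\ is_C2_solution n Om L a b p2 /\
  forall c1 c2 : R, (forall x, in_interval a b x -> c1 * p1 x + c2 * p2 x = 0) ->
    c1 = 0 /\ c2 = 0.

Definition f_p (Om L p : R -> R) (x y : R) : R :=
  p x * y + Om x * Derive p x - L x * p x.

Definition dx (F : R -> R -> R) (x y : R) : R := Derive (fun t => F t y) x.
Definition dy (F : R -> R -> R) (x y : R) : R := Derive (fun t => F x t) y.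

Definition open2 (V : R -> R -> Prop) : Prop :=
  forall x y, V x y -> exists eps : posreal, forall u v,
    Rabs (u - x) < eps -> Rabs (v - y) < eps -> V u v.

Definition first_integral (P Q H : R -> R -> R) (U : R -> R -> Prop) : Prop :=
  (forall x y, U x y ->
     ex_derive (fun t => H t y) x /\ ex_derive (fun t => H x t) y /\
     continuity_2d_pt (dx H) x y /\ continuity_2d_pt (dy H) x y /\
     P x y * dx H x y + Q x y * dy H x y = 0) /\
  (forall V : R -> R -> Prop, open2 V -> (exists x y, V x y) ->
     (forall x y, V x y -> U x y) ->
     exists x1 y1 x2 y2, V x1 y1 /\ V x2 y2 /\ H x1 y1 <> H x2 y2).

From Stdlib Require Import Reals Lra Psatz Classical.
From Coquelicot Require Import Coquelicot.
Open Scope R_scope.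

(* [f_p] is a Darboux function of the Riccati field with cofactor [y + L]: the field applied
   to [f_p] equals [(y + L) f_p] plus [Om] times the left-hand side of the linear equation,
   which vanishes for solutions. Two Darboux functions with a common cofactor have a quotient
   annihilated by the field. If [f_p1 / f_p2] were a constant [k] on an open set then, [f_p]
   being affine in [y] with slope [p], [p1 - k p2] would vanish on an interval together with
   its derivative; by uniqueness for the linear equation (a Gronwall estimate for
   [q^2 + q'^2], possible since [Om] has no zeros) it would vanish on the whole interval,
   contradicting the independence of [p1] and [p2]. *)

Lemma continuous_ex_derive (f : R -> R) (x : R) : ex_derive f x -> continuous f x.
Proof. exact (@ex_derive_continuous R_AbsRing R_NormedModule f x). Qed.

Lemma is_derive_Rmult (f g : R -> R) (x df dg : R) :
  is_derive f x df -> is_derive g x dg ->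
  is_derive (fun t => f t * g t) x (df * g x + f x * dg).
Proof. intros Hf Hg. apply (is_derive_mult f g); auto. intros; apply Rmult_comm. Qed.

Lemma energy_derivative_bound (q q1 a b M : R) :
  Rabs a <= M -> Rabs b <= M ->
  Rabs (2 * q * q1 + 2 * q1 * (a * q1 + b * q)) <= (1 + 3 * M) * (q * q + q1 * q1).
Proof.
  intros Ha Hb. apply Rabs_le_between in Ha. apply Rabs_le_between in Hb.
  assert (0 <= (q - q1) * (q - q1)) by apply Rle_0_sqr.
  assert (0 <= (q + q1) * (q + q1)) by apply Rle_0_sqr.
  assert (0 <= q1 * q1) by apply Rle_0_sqr.
  apply Rabs_le. split; nra.
Qed.

Lemma gronwall_segment_zero (E dE : R -> R) (C x0 x1 : R) :
  (forall u, Rmin x0 x1 <= u <= Rmax x0 x1 ->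
     is_derive E u (dE u) /\ Rabs (dE u) <= C * E u) ->
  E x0 = 0 -> E x1 <= 0.
Proof.
  intros HE HE0.
  set (s := if Rle_dec x0 x1 then 1 else -1).
  assert (Hs : s * s = 1 /\ 0 <= s * (x1 - x0))
    by (unfold s; destruct (Rle_dec x0 x1); split; lra).
  set (w := fun u => exp (- C * s * (u - x0))).
  set (dg := fun u => (dE u - C * s * E u) * w u).
  assert (Dg : forall u, Rmin x0 x1 <= u <= Rmax x0 x1 ->
                 is_derive (fun t => E t * w t) u (dg u)).
  { intros u Hu. destruct (HE u Hu) as [DE _]. unfold dg, w.
    auto_derive.
    - exists (dE u). exact DE.
    - replace (Derive (fun t => E t) u) with (dE u)
        by (symmetry; apply is_derive_unique, DE).
      unfold Rminus. ring. }
  destruct (MVT_gen (fun t => E t * w t) x0 x1 dg) as [c [Hc Hmvt]].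
  { intros u Hu. apply Dg. lra. }
  { intros u Hu. apply continuity_pt_filterlim.
    apply (continuous_ex_derive (fun t => E t * w t)).
    exists (dg u). exact (Dg u Hu). }
  destruct (HE c Hc) as [_ Hbound].
  assert (Hw : forall u, 0 < w u) by (intros; apply exp_pos).
  assert (Hdg : dg c * (x1 - x0) <= 0).
  { destruct Hs as [Hss Hs].
    assert (Hsign : (dE c - C * s * E c) * (x1 - x0)
                    = (s * dE c - C * E c) * (s * (x1 - x0))).
    { transitivity (s * s * dE c * (x1 - x0) - C * s * E c * (x1 - x0)).
      - rewrite Hss. ring.
      - ring. }
    assert (s * dE c <= Rabs (dE c)).
    { unfold s; destruct (Rle_dec x0 x1).
      - rewrite Rmult_1_l. apply Rle_abs.
      - rewrite <- Rabs_Ropp. replace (-1 * dE c) with (- dE c) by ring. apply Rle_abs. }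
    unfold dg. replace ((dE c - C * s * E c) * w c * (x1 - x0))
      with ((s * dE c - C * E c) * (s * (x1 - x0)) * w c) by (rewrite <- Hsign; ring).
    specialize (Hw c).
    assert (0 <= (C * E c - s * dE c) * (s * (x1 - x0))) by (apply Rmult_le_pos; lra).
    nra. }
  rewrite HE0, Rmult_0_l in Hmvt. specialize (Hw x1). nra.
Qed.

Lemma continuous_bounded_on_segment (f : R -> R) (x0 x1 : R) :
  (forall u, Rmin x0 x1 <= u <= Rmax x0 x1 -> continuity_pt f u) ->
  exists M, forall u, Rmin x0 x1 <= u <= Rmax x0 x1 -> Rabs (f u) <= M.
Proof.
  intros Hf.
  destruct (continuity_ab_maj (fun u => Rabs (f u)) (Rmin x0 x1) (Rmax x0 x1))
    as [m [Hm _]].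
  - apply Rle_trans with x0; [apply Rmin_l | apply Rmax_l].
  - intros u Hu. apply (continuity_pt_comp f Rabs); auto. apply Rcontinuity_abs.
  - exists (Rabs (f m)). exact Hm.
Qed.

Lemma linear_ode2_zero (q q1 q2 a b : R -> R) (x0 x1 : R) :
  (forall u, Rmin x0 x1 <= u <= Rmax x0 x1 ->
     is_derive q u (q1 u) /\ is_derive q1 u (q2 u) /\ q2 u = a u * q1 u + b u * q u /\
     continuous a u /\ continuous b u) ->
  q x0 = 0 -> q1 x0 = 0 -> q x1 = 0.
Proof.
  intros Hq Hq0 Hq10.
  destruct (continuous_bounded_on_segment a x0 x1) as [Ma Ha].
  { intros u Hu. apply continuity_pt_filterlim, Hq, Hu. }
  destruct (continuous_bounded_on_segment b x0 x1) as [Mb Hb].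
  { intros u Hu. apply continuity_pt_filterlim, Hq, Hu. }
  set (M := Rmax Ma Mb).
  assert (Hzero : q x1 * q x1 + q1 x1 * q1 x1 <= 0).
  { apply (gronwall_segment_zero (fun u => q u * q u + q1 u * q1 u)
             (fun u => 2 * q u * q1 u + 2 * q1 u * q2 u) (1 + 3 * M) x0 x1).
    - intros u Hu. destruct (Hq u Hu) as [Dq [Dq1 [Hode _]]]. split.
      + replace (2 * q u * q1 u + 2 * q1 u * q2 u)
          with ((q1 u * q u + q u * q1 u) + (q2 u * q1 u + q1 u * q2 u)) by ring.
        apply (is_derive_plus (fun u => q u * q u) (fun u => q1 u * q1 u));
          apply is_derive_Rmult; assumption.
      + rewrite Hode. apply energy_derivative_bound.
        * apply Rle_trans with Ma; [apply Ha, Hu | apply Rmax_l].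
        * apply Rle_trans with Mb; [apply Hb, Hu | apply Rmax_r].
    - rewrite Hq0, Hq10. ring. }
  assert (0 <= q1 x1 * q1 x1) by apply Rle_0_sqr.
  nra.
Qed.

Lemma in_interval_nbhd (a b : Rbar) (x : R) : in_interval a b x ->
  exists r, 0 < r /\ forall u, Rabs (u - x) < r -> in_interval a b u.
Proof.
  unfold in_interval. intros [Ha Hb].
  destruct a as [a| |]; destruct b as [b| |]; simpl in *; try contradiction;
  [ exists (Rmin (x - a) (b - x)) | exists (x - a) | exists (b - x) | exists 1 ];
  (split; [ try apply Rmin_glb_lt; lra | intros u Hu; apply Rabs_def2 in Hu ]);
  try (pose proof (Rmin_l (x - a) (b - x)); pose proof (Rmin_r (x - a) (b - x)));
  simpl; lra.
Qed.

Lemma in_interval_segment (a b : Rbar) (x0 x1 u : R) :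
  in_interval a b x0 -> in_interval a b x1 ->
  Rmin x0 x1 <= u <= Rmax x0 x1 -> in_interval a b u.
Proof.
  unfold in_interval, Rmin, Rmax. intros [H1 H2] [H3 H4] Hu.
  destruct (Rle_dec x0 x1);
  destruct a as [a| |]; destruct b as [b| |]; simpl in *; try contradiction; split; lra.
Qed.

Lemma open2_strip (a b : Rbar) : open2 (fun x _ => in_interval a b x).
Proof.
  intros x y Hx. destruct (in_interval_nbhd a b x Hx) as [r [Hr Hu]].
  exists (mkposreal r Hr). intros u v Hux _. exact (Hu u Hux).
Qed.

Lemma continuity_2d_pt_lift (f : R -> R) (x y : R) :
  continuity_pt f x -> continuity_2d_pt (fun u _ => f u) x y.
Proof.
  intros Hf. exact (continuity_1d_2d_pt_comp f (fun u _ => u) x y Hf (continuity_2d_pt_id1 x y)).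
Qed.

Lemma continuity_2d_pt_affine_y (f g : R -> R) (x y : R) :
  continuity_pt f x -> continuity_pt g x ->
  continuity_2d_pt (fun u v => f u * v + g u) x y.
Proof.
  intros Hf Hg. apply continuity_2d_pt_plus; [apply continuity_2d_pt_mult|];
    auto using continuity_2d_pt_lift, continuity_2d_pt_id2.
Qed.

Definition darboux_C1 (P Q K F Fx Fy : R -> R -> R) (U : R -> R -> Prop) : Prop :=
  forall x y, U x y ->
    is_derive (fun t => F t y) x (Fx x y) /\ is_derive (fun t => F x t) y (Fy x y) /\
    continuity_2d_pt F x y /\ continuity_2d_pt Fx x y /\ continuity_2d_pt Fy x y /\
    P x y * Fx x y + Q x y * Fy x y = K x y * F x y.

Lemma quotient_rule_annihilated (P Q K F1 F2 D1 D2 E1 E2 : R) :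
  P * D1 + Q * E1 = K * F1 -> P * D2 + Q * E2 = K * F2 -> F2 <> 0 ->
  P * ((D1 * F2 - F1 * D2) / F2 ^ 2) + Q * ((E1 * F2 - F1 * E2) / F2 ^ 2) = 0.
Proof.
  intros H1 H2 HF2.
  replace (P * ((D1 * F2 - F1 * D2) / F2 ^ 2) + Q * ((E1 * F2 - F1 * E2) / F2 ^ 2))
    with ((F2 * (P * D1 + Q * E1) - F1 * (P * D2 + Q * E2)) / F2 ^ 2) by (field; auto).
  rewrite H1, H2. unfold Rdiv. ring.
Qed.

Lemma continuity_2d_pt_quotient_rule (F1 F2 D1 D2 : R -> R -> R) (x y : R) :
  continuity_2d_pt F1 x y -> continuity_2d_pt F2 x y ->
  continuity_2d_pt D1 x y -> continuity_2d_pt D2 x y -> F2 x y <> 0 ->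
  continuity_2d_pt (fun u v => (D1 u v * F2 u v - F1 u v * D2 u v) / F2 u v ^ 2) x y.
Proof.
  intros C1 C2 CD1 CD2 HF2.
  apply (continuity_2d_pt_ext
           (fun u v => (D1 u v * F2 u v - F1 u v * D2 u v) * / (F2 u v * F2 u v))).
  { intros u v. unfold Rdiv. simpl. rewrite Rmult_1_r. reflexivity. }
  apply continuity_2d_pt_mult.
  - apply continuity_2d_pt_minus; apply continuity_2d_pt_mult; assumption.
  - apply continuity_2d_pt_inv; [apply continuity_2d_pt_mult; assumption|].
    apply Rmult_integral_contrapositive; auto.
Qed.

Section DarbouxQuotient.

Variables (P Q K F1 F2 D1 D2 E1 E2 : R -> R -> R) (U : R -> R -> Prop).
Hypothesis U_open : open2 U.
Hypothesis F1_darboux : darboux_C1 P Q K F1 D1 E1 U.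
Hypothesis F2_darboux : darboux_C1 P Q K F2 D2 E2 U.

Lemma darboux_quotient_partials (x y : R) : U x y -> F2 x y <> 0 ->
  is_derive (fun t => F1 t y / F2 t y) x
    ((D1 x y * F2 x y - F1 x y * D2 x y) / F2 x y ^ 2) /\
  is_derive (fun t => F1 x t / F2 x t) y
    ((E1 x y * F2 x y - F1 x y * E2 x y) / F2 x y ^ 2).
Proof.
  intros Hxy HF2.
  destruct (F1_darboux x y Hxy) as [A1 [A2 _]]. destruct (F2_darboux x y Hxy) as [B1 [B2 _]].
  split; apply (is_derive_div (fun t => _) (fun t => _)); assumption.
Qed.

Lemma darboux_quotient_first_integral (x y : R) : U x y -> F2 x y <> 0 ->
  let H := fun u v => F1 u v / F2 u v in
  ex_derive (fun t => H t y) x /\ ex_derive (fun t => H x t) y /\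
  continuity_2d_pt (dx H) x y /\ continuity_2d_pt (dy H) x y /\
  P x y * dx H x y + Q x y * dy H x y = 0.
Proof.
  intros Hxy HF2 H.
  destruct (F1_darboux x y Hxy) as [_ [_ [C1 [CD1 [CE1 K1]]]]].
  destruct (F2_darboux x y Hxy) as [_ [_ [C2 [CD2 [CE2 K2]]]]].
  assert (Hnbhd : locally_2d (fun u v => U u v /\ F2 u v <> 0) x y).
  { destruct (U_open x y Hxy) as [e He].
    destruct (continuity_2d_pt_neq_0 F2 x y C2 HF2) as [d Hd].
    exists (mkposreal _ (Rmin_pos _ _ (cond_pos e) (cond_pos d))).
    intros u v Hu Hv. simpl in Hu, Hv. split.
    - apply He; eapply Rlt_le_trans; eauto; apply Rmin_l.
    - apply Hd; eapply Rlt_le_trans; eauto; apply Rmin_r. }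
  destruct Hnbhd as [d Hd].
  destruct (darboux_quotient_partials x y Hxy HF2) as [DHx DHy].
  split; [eexists; exact DHx|]. split; [eexists; exact DHy|].
  split; [|split].
  - apply (continuity_2d_pt_ext_loc (fun u v => (D1 u v * F2 u v - F1 u v * D2 u v) / F2 u v ^ 2)).
    + exists d. intros u v Hu Hv. destruct (Hd u v Hu Hv) as [Huv Hne].
      symmetry. apply is_derive_unique, (darboux_quotient_partials u v Huv Hne).
    + apply continuity_2d_pt_quotient_rule; assumption.
  - apply (continuity_2d_pt_ext_loc (fun u v => (E1 u v * F2 u v - F1 u v * E2 u v) / F2 u v ^ 2)).
    + exists d. intros u v Hu Hv. destruct (Hd u v Hu Hv) as [Huv Hne].
      symmetry. apply is_derive_unique, (darboux_quotient_partials u v Huv Hne).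
    + apply continuity_2d_pt_quotient_rule; assumption.
  - replace (dx H x y) with ((D1 x y * F2 x y - F1 x y * D2 x y) / F2 x y ^ 2)
      by (symmetry; apply is_derive_unique, DHx).
    replace (dy H x y) with ((E1 x y * F2 x y - F1 x y * E2 x y) / F2 x y ^ 2)
      by (symmetry; apply is_derive_unique, DHy).
    apply (quotient_rule_annihilated _ _ (K x y)); assumption.
Qed.

End DarbouxQuotient.

Definition dx_f_p (Om L p : R -> R) (x y : R) : R :=
  Derive p x * y + (Derive Om x * Derive p x + Om x * Derive (Derive p) x
                    - (Derive L x * p x + L x * Derive p x)).

Definition ode_residual (n : R) (Om L p : R -> R) (x : R) : R :=
  Om x * Derive (Derive p) x + (Derive Om x - 2 * L x) * Derive p x
  + n / 2 * (4 * Derive L x - (n + 1) * Derive (Derive Om) x) * p x.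

Lemma is_derive_f_p_x (Om L p : R -> R) (x y : R) :
  ex_derive Om x -> ex_derive L x -> ex_derive p x -> ex_derive (Derive p) x ->
  is_derive (fun t => f_p Om L p t y) x (dx_f_p Om L p x y).
Proof.
  intros HOm HL Hp Hp'. unfold f_p, dx_f_p. auto_derive; [tauto|].
  change (fun t => p t) with p; change (fun t => Om t) with Om;
  change (fun t => L t) with L; change (fun t => Derive p t) with (Derive p).
  ring.
Qed.

Lemma is_derive_f_p_y (Om L p : R -> R) (x y : R) :
  is_derive (fun t => f_p Om L p x t) y (p x).
Proof. unfold f_p. auto_derive; [exact I|]. ring. Qed.

Lemma f_p_cofactor_identity (n : R) (Om L p : R -> R) (x y : R) :
  Om x * dx_f_p Om L p x y + ydot n Om L x y * p x
  = (y + L x) * f_p Om L p x y + Om x * ode_residual n Om L p x.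
Proof. unfold dx_f_p, ydot, f_p, ode_residual. field. Qed.

Lemma f_p_slope_proportional (Om L p1 p2 : R -> R) (k x y1 y2 : R) : y1 <> y2 ->
  f_p Om L p1 x y1 = k * f_p Om L p2 x y1 -> f_p Om L p1 x y2 = k * f_p Om L p2 x y2 ->
  p1 x - k * p2 x = 0.
Proof.
  unfold f_p. intros Hy H1 H2.
  apply (Rmult_eq_reg_r (y1 - y2)); [|lra].
  rewrite Rmult_0_l. lra.
Qed.

Section LinearEquation.

Variables (n : R) (Om L : R -> R) (a b : Rbar).
Hypothesis Om_C2 : forall x, in_interval a b x ->
  ex_derive Om x /\ ex_derive (Derive Om) x /\ continuous (Derive (Derive Om)) x.
Hypothesis L_C1 : forall x, in_interval a b x -> ex_derive L x /\ continuous (Derive L) x.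
Hypothesis Om_neq0 : forall x, in_interval a b x -> Om x <> 0.

Lemma f_p_darboux (p : R -> R) : is_C2_solution n Om L a b p ->
  darboux_C1 (fun x _ => Om x) (ydot n Om L) (fun x y => y + L x)
    (f_p Om L p) (dx_f_p Om L p) (fun x _ => p x) (fun x _ => in_interval a b x).
Proof.
  intros Hp x y Hx.
  destruct (Hp x Hx) as [Dp [Dp' [Cp'' Hode]]].
  destruct (Om_C2 x Hx) as [DOm [DOm' _]]. destruct (L_C1 x Hx) as [DL CL'].
  assert (Cont : forall f, ex_derive f x -> continuity_pt f x)
    by (intros f Hf; apply continuity_pt_filterlim, continuous_ex_derive, Hf).
  split; [apply is_derive_f_p_x; assumption|].
  split; [apply is_derive_f_p_y|].
  split; [|split; [|split]].
  - apply (continuity_2d_pt_ext (fun u v => p u * v + (Om u * Derive p u - L u * p u)));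
      [intros; unfold f_p; ring|].
    apply continuity_2d_pt_affine_y.
    + apply Cont, Dp.
    + apply continuity_pt_minus; apply continuity_pt_mult; apply Cont; assumption.
  - unfold dx_f_p. apply continuity_2d_pt_affine_y.
    + apply Cont, Dp'.
    + apply continuity_pt_minus; apply continuity_pt_plus; apply continuity_pt_mult;
        try (apply Cont; assumption); apply continuity_pt_filterlim; assumption.
  - apply continuity_2d_pt_lift, Cont, Dp.
  - rewrite f_p_cofactor_identity. unfold ode_residual. rewrite Hode. ring.
Qed.

Lemma ode_coefficients_continuous (x : R) : in_interval a b x ->
  continuous (fun t => - (Derive Om t - 2 * L t) / Om t) x /\
  continuous (fun t => - (n / 2 * (4 * Derive L t - (n + 1) * Derive (Derive Om) t)) / Om t) x.
Proof.
  intros Hx. destruct (Om_C2 x Hx) as [DOm [DOm' COm'']]. destruct (L_C1 x Hx) as [DL CL'].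
  assert (Inv : continuous (fun t => / Om t) x)
    by (apply continuous_Rinv_comp; [apply continuous_ex_derive|apply Om_neq0]; assumption).
  split.
  - apply (continuous_mult (fun t => - (Derive Om t - 2 * L t)) (fun t => / Om t)); [|exact Inv].
    apply (continuous_opp (fun t => Derive Om t - 2 * L t)).
    apply (continuous_minus (Derive Om) (fun t => 2 * L t)); [apply continuous_ex_derive, DOm'|].
    apply (continuous_mult (fun _ => 2) L); [apply continuous_const|apply continuous_ex_derive, DL].
  - apply (continuous_mult (fun t => - (n / 2 * (4 * Derive L t - (n + 1) * Derive (Derive Om) t)))
             (fun t => / Om t)); [|exact Inv].
    apply (continuous_opp (fun t => n / 2 * (4 * Derive L t - (n + 1) * Derive (Derive Om) t))).
    apply (continuous_mult (fun _ => n / 2)); [apply continuous_const|].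
    apply (continuous_minus (fun t => 4 * Derive L t)).
    + apply (continuous_mult (fun _ => 4)); [apply continuous_const|exact CL'].
    + apply (continuous_mult (fun _ => n + 1)); [apply continuous_const|exact COm''].
Qed.

Lemma solution_combination_zero (p1 p2 : R -> R) (c1 c2 x0 : R) :
  is_C2_solution n Om L a b p1 -> is_C2_solution n Om L a b p2 -> in_interval a b x0 ->
  c1 * p1 x0 + c2 * p2 x0 = 0 -> c1 * Derive p1 x0 + c2 * Derive p2 x0 = 0 ->
  forall x, in_interval a b x -> c1 * p1 x + c2 * p2 x = 0.
Proof.
  intros S1 S2 Hx0 Hq0 Hq10 x Hx.
  apply (linear_ode2_zero (fun t => c1 * p1 t + c2 * p2 t)
           (fun t => c1 * Derive p1 t + c2 * Derive p2 t)
           (fun t => c1 * Derive (Derive p1) t + c2 * Derive (Derive p2) t)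
           (fun t => - (Derive Om t - 2 * L t) / Om t)
           (fun t => - (n / 2 * (4 * Derive L t - (n + 1) * Derive (Derive Om) t)) / Om t)
           x0 x); [|assumption|assumption].
  intros u Hu. assert (Iu : in_interval a b u) by exact (in_interval_segment a b x0 x u Hx0 Hx Hu).
  destruct (S1 u Iu) as [D1 [D1' [_ O1]]]. destruct (S2 u Iu) as [D2 [D2' [_ O2]]].
  split; [|split; [|split]].
  - apply (is_derive_plus (fun t => c1 * p1 t) (fun t => c2 * p2 t));
      apply is_derive_scal, Derive_correct; assumption.
  - apply (is_derive_plus (fun t => c1 * Derive p1 t) (fun t => c2 * Derive p2 t));
      apply is_derive_scal, Derive_correct; assumption.
  - set (A := Derive Om u - 2 * L u) in *.
    set (B := n / 2 * (4 * Derive L u - (n + 1) * Derive (Derive Om) u)) in *.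
    apply (Rmult_eq_reg_l (Om u)); [|apply Om_neq0, Iu].
    transitivity (c1 * (Om u * Derive (Derive p1) u) + c2 * (Om u * Derive (Derive p2) u));
      [ring|].
    replace (Om u * Derive (Derive p1) u) with (- A * Derive p1 u - B * p1 u) by lra.
    replace (Om u * Derive (Derive p2) u) with (- A * Derive p2 u - B * p2 u) by lra.
    field. apply Om_neq0, Iu.
  - apply ode_coefficients_continuous, Iu.
Qed.

Lemma f_p_quotient_nonconstant (p1 p2 : R -> R) :
  fundamental_system n Om L a b p1 p2 ->
  forall V : R -> R -> Prop, open2 V -> (exists x y, V x y) ->
  (forall x y, V x y -> in_interval a b x /\ f_p Om L p2 x y <> 0) ->
  exists x1 y1 x2 y2, V x1 y1 /\ V x2 y2 /\
    f_p Om L p1 x1 y1 / f_p Om L p2 x1 y1 <> f_p Om L p1 x2 y2 / f_p Om L p2 x2 y2.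
Proof.
  intros [S1 [S2 Hind]] V HV [x0 [y0 H0]] HVU.
  apply NNPP. intros Hconst.
  set (k := f_p Om L p1 x0 y0 / f_p Om L p2 x0 y0).
  assert (Hprop : forall u v, V u v -> f_p Om L p1 u v = k * f_p Om L p2 u v).
  { intros u v Huv. destruct (HVU u v Huv) as [_ Hne].
    destruct (Req_dec (f_p Om L p1 u v / f_p Om L p2 u v) k) as [Hk|Hk].
    - rewrite <- Hk. field. exact Hne.
    - exfalso. apply Hconst. exists u, v, x0, y0. auto. }
  destruct (HV x0 y0 H0) as [eps Heps]. pose proof (cond_pos eps) as Heps_pos.
  assert (Hx0 : in_interval a b x0) by apply (HVU x0 y0 H0).
  (* [f_p] is affine in [y] with slope [p], so proportionality on a box forces [p1 = k p2]. *)
  assert (Hq : forall u, Rabs (u - x0) < eps -> p1 u - k * p2 u = 0).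
  { intros u Hu. apply (f_p_slope_proportional Om L p1 p2 k u y0 (y0 + eps / 2)); [lra| |];
      apply Hprop, Heps; try assumption.
    - rewrite Rminus_diag, Rabs_R0. exact Heps_pos.
    - replace (y0 + eps / 2 - y0) with (eps / 2) by ring. rewrite Rabs_pos_eq; lra. }
  assert (Hq' : Derive p1 x0 - k * Derive p2 x0 = 0).
  { destruct (S1 x0 Hx0) as [D1 _]. destruct (S2 x0 Hx0) as [D2 _].
    assert (Dq : is_derive (fun t => p1 t - k * p2 t) x0 (Derive p1 x0 - k * Derive p2 x0)).
    { apply (is_derive_minus p1 (fun t => k * p2 t)); [|apply is_derive_scal];
        apply Derive_correct; assumption. }
    assert (Dq0 : is_derive (fun t => p1 t - k * p2 t) x0 0).
    { apply (is_derive_ext_loc (fun _ => 0)); [|auto_derive; easy].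
      exists eps. intros t Ht. symmetry. apply Hq, Ht. }
    rewrite <- (is_derive_unique _ _ _ Dq). exact (is_derive_unique _ _ _ Dq0). }
  destruct (Hind 1 (- k)) as [H10 _]; [|lra].
  apply (solution_combination_zero p1 p2 1 (- k) x0 S1 S2 Hx0).
  - assert (Hq0 := Hq x0 ltac:(rewrite Rminus_diag, Rabs_R0; exact Heps_pos)). lra.
  - lra.
Qed.

End LinearEquation.

Lemma Derive_poly2 (c2 c1 c0 x : R) : Derive (poly2 c2 c1 c0) x = 2 * c2 * x + c1.
Proof. apply is_derive_unique. unfold poly2. auto_derive; [easy|]. ring. Qed.

Lemma poly2_C2 (c2 c1 c0 x : R) :
  ex_derive (poly2 c2 c1 c0) x /\ ex_derive (Derive (poly2 c2 c1 c0)) x /\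
  continuous (Derive (Derive (poly2 c2 c1 c0))) x.
Proof.
  assert (DD : forall t, Derive (Derive (poly2 c2 c1 c0)) t = 2 * c2).
  { intros t. rewrite (Derive_ext _ (fun u => 2 * c2 * u + c1)) by apply Derive_poly2.
    apply is_derive_unique. auto_derive; [easy|]. ring. }
  split; [|split].
  - unfold poly2. auto_derive. easy.
  - apply (ex_derive_ext (fun u => 2 * c2 * u + c1)); [intros; symmetry; apply Derive_poly2|].
    auto_derive. easy.
  - apply (continuous_ext (fun _ => 2 * c2)); [intros; symmetry; apply DD|].
    apply continuous_const.
Qed.

Lemma poly1_C1 (l1 l0 x : R) :
  ex_derive (poly1 l1 l0) x /\ continuous (Derive (poly1 l1 l0)) x.
Proof.
  assert (D : forall t, Derive (poly1 l1 l0) t = l1).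
  { intros t. apply is_derive_unique. unfold poly1. auto_derive; [easy|]. ring. }
  split.
  - unfold poly1. auto_derive. easy.
  - apply (continuous_ext (fun _ => l1)); [intros; symmetry; apply D|].
    apply continuous_const.
Qed.

Theorem mainTheorem10 (n c2 c1 c0 l1 l0 : R) (a b : Rbar) :
  ~ (c2 = 0 /\ c1 = 0 /\ c0 = 0) ->
  Rbar_lt a b ->
  (forall x, in_interval a b x -> poly2 c2 c1 c0 x <> 0) ->
  (forall p : R -> R, is_C2_solution n (poly2 c2 c1 c0) (poly1 l1 l0) a b p ->
     forall x y : R, in_interval a b x ->
       ex_derive (fun t => f_p (poly2 c2 c1 c0) (poly1 l1 l0) p t y) x /\
       ex_derive (fun t => f_p (poly2 c2 c1 c0) (poly1 l1 l0) p x t) y /\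
       poly2 c2 c1 c0 x * dx (f_p (poly2 c2 c1 c0) (poly1 l1 l0) p) x y
       + ydot n (poly2 c2 c1 c0) (poly1 l1 l0) x y
         * dy (f_p (poly2 c2 c1 c0) (poly1 l1 l0) p) x y
       = (y + poly1 l1 l0 x) * f_p (poly2 c2 c1 c0) (poly1 l1 l0) p x y) /\
  (forall p1 p2 : R -> R,
     fundamental_system n (poly2 c2 c1 c0) (poly1 l1 l0) a b p1 p2 ->
     first_integral (fun x _ => poly2 c2 c1 c0 x)
       (ydot n (poly2 c2 c1 c0) (poly1 l1 l0))
       (fun x y => f_p (poly2 c2 c1 c0) (poly1 l1 l0) p1 x y
                   / f_p (poly2 c2 c1 c0) (poly1 l1 l0) p2 x y)
       (fun x y => in_interval a b x /\ f_p (poly2 c2 c1 c0) (poly1 l1 l0) p2 x y <> 0)).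
Proof.
  intros _ _ Om_neq0.
  assert (Om_C2 := fun x (_ : in_interval a b x) => poly2_C2 c2 c1 c0 x).
  assert (L_C1 := fun x (_ : in_interval a b x) => poly1_C1 l1 l0 x).
  split.
  - intros p Hp x y Hx.
    destruct (f_p_darboux n _ _ a b Om_C2 L_C1 p Hp x y Hx) as [Dx [Dy [_ [_ [_ Hcof]]]]].
    split; [eexists; exact Dx|]. split; [eexists; exact Dy|].
    replace (dx _ x y) with (dx_f_p (poly2 c2 c1 c0) (poly1 l1 l0) p x y)
      by (symmetry; apply is_derive_unique, Dx).
    replace (dy _ x y) with (p x) by (symmetry; apply is_derive_unique, Dy).
    exact Hcof.
  - intros p1 p2 Hfs. split.
    + intros x y [Hx Hne]. destruct Hfs as [S1 [S2 _]].
      apply (darboux_quotient_first_integral _ _ _ _ _ _ _ _ _ _ (open2_strip a b)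
               (f_p_darboux n _ _ a b Om_C2 L_C1 p1 S1)
               (f_p_darboux n _ _ a b Om_C2 L_C1 p2 S2) x y Hx Hne).
    + exact (f_p_quotient_nonconstant n _ _ a b Om_C2 L_C1 Om_neq0 p1 p2 Hfs).
Qed.
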